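(* If $A\subseteq\mathbb{N}$ is pseudorandom, then there are infinite sets $B,C\subseteq\mathbb{N}$ such that $B+C\subseteq A$.
   Context: $\mathbb{N}=\{1,2,3,\dots\}$, $[1,n]=\{1,\dots,n\}$, $B+C=\{b+c:b\in B,c\in C\}$, $A-i=\{a-i:a\in A\}$. The upper density of $A\subseteq\mathbb{N}$ is $\overline{d}(A)=\limsup_{n\to\infty}\frac{|A\cap[1,n]|}{n}$. Work in a countably saturated nonstandard universe; ${}^*X$ denotes the nonstandard extension of $X$ and $\operatorname{st}$ the standard part. For hyperfinite $N\in{}^*\mathbb{N}\setminus\mathbb{N}$ and $X\subseteq\mathbb{N}$ write $X_N={}^*X\cap[1,N]$; the Loeb measure $\mu_N$ on $[1,N]$ is the countably additive extension of $\mu_N(Y)=\operatorname{st}(|Y|/N)$ for internal $Y\subseteq[1,N]$. Definition: $A\subseteq\mathbb{N}$ with $\overline{d}(A)=\alpha>0$ is pseudorandom if there is $N\in{}^*\mathbb{N}\setminus\mathbb{N}$ with $\mu_N(A_N)=\alpha$ such that $\chi_{A_N}-\alpha$ is weakly mixing for the unitary operator $U_T f=f\circ T$ on $L^2(\mu_N)$, where $T(x)=x+1\pmod N$ on $[1,N]$; here $x$ in a Hilbert space is weakly mixing for a unitary $U$ if $\lim_{n\to\infty}\frac1n\sum_{i=1}^n|\langle U^ix,x\rangle|=0$. Equivalently, there is such $N$ with $\lim_{n\to\infty}\frac1n\sum_{i=1}^n|\mu_N(A_N\cap(A-i)_N)-\alpha^2|=0$. *)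

From Stdlib Require Import Reals Lra Lia Arith.
Open Scope R_scope.

(* Subsets of N = {1,2,...} are represented as boolean predicates on nat;
   the value at 0 is irrelevant for all counting below (which ranges over [1,n]). *)

Fixpoint count (X : nat -> bool) (n : nat) : nat :=
  match n with
  | O => O
  | S m => (count X m + (if X (S m) then 1 else 0))%nat
  end.

Definition shift_inter (A : nat -> bool) (i : nat) : nat -> bool :=
  fun x => andb (A x) (A (x + i)%nat).

(* \bar d(A) = alpha, i.e. limsup_n |A ∩ [1,n]|/n = alpha *)
Definition upper_density_is (A : nat -> bool) (alpha : R) : Prop :=
  (forall eps, eps > 0 -> exists n0 : nat, forall n : nat, (n0 <= n)%nat ->
       INR (count A n) / INR n < alpha + eps) /\
  (forall eps, eps > 0 -> forall n0 : nat, exists n : nat, (n0 <= n)%nat /\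
       INR (count A n) / INR n > alpha - eps).

(* Nonstandard universe modelled as the ultrapower of N by a nonprincipal
   ultrafilter U on N (such ultrapowers are countably saturated). *)
Definition nonprincipal_ultrafilter (U : (nat -> Prop) -> Prop) : Prop :=
  (forall S T : nat -> Prop, U S -> (forall k, S k -> T k) -> U T) /\
  (forall S T : nat -> Prop, U S -> U T -> U (fun k => S k /\ T k)) /\
  (forall S : nat -> Prop, U S \/ U (fun k => ~ S k)) /\
  ~ U (fun _ => False) /\
  (forall m : nat, U (fun k => (m <= k)%nat)).

(* N = [Nk]_U is an infinite (unlimited) hypernatural *)
Definition hyper_infinite (U : (nat -> Prop) -> Prop) (Nk : nat -> nat) : Prop :=
  forall m : nat, U (fun k => (m < Nk k)%nat).

(* the standard part of the hyperreal [x]_U equals L *)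
Definition ulim (U : (nat -> Prop) -> Prop) (x : nat -> R) (L : R) : Prop :=
  forall eps, eps > 0 -> U (fun k => Rabs (x k - L) < eps).

(* mu_N(X_N) = st(|*X ∩ [1,N]| / N) for N = [Nk]_U *)
Definition loeb_measure_is (U : (nat -> Prop) -> Prop) (Nk : nat -> nat)
  (X : nat -> bool) (m : R) : Prop :=
  ulim U (fun k => INR (count X (Nk k)) / INR (Nk k)) m.

Fixpoint sum1 (f : nat -> R) (n : nat) : R :=
  match n with
  | O => 0
  | S m => sum1 f m + f (S m)
  end.

(* Pseudorandomness (the equivalent form given in the paper):
   exists an infinite hypernatural N with mu_N(A_N) = alpha and
   lim_n (1/n) sum_{i=1}^n |mu_N(A_N ∩ (A-i)_N) - alpha^2| = 0. *)
Definition pseudorandom (U : (nat -> Prop) -> Prop) (A : nat -> bool) : Prop :=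
  exists alpha : R, alpha > 0 /\ upper_density_is A alpha /\
  exists Nk : nat -> nat, hyper_infinite U Nk /\
    loeb_measure_is U Nk A alpha /\
    exists c : nat -> R,
      (forall i : nat, (1 <= i)%nat -> loeb_measure_is U Nk (shift_inter A i) (c i)) /\
      Un_cv (fun n => / INR n * sum1 (fun i => Rabs (c i - alpha ^ 2)) n) 0.

Definition infinite_set (B : nat -> bool) : Prop :=
  forall m : nat, exists b : nat, (m < b)%nat /\ B b = true.

Definition subset_posnat (B : nat -> bool) : Prop :=
  forall b : nat, B b = true -> (1 <= b)%nat.

(* Let A have density a = mu_N(A_N) in a hyperfinite window N = [N_k]_U whose
   autocorrelations c d = mu_N(A_N ∩ (A - d)_N) equal a^2 on Cesàro average.
   The heart of the proof is an energy estimate of van der Corput type: for a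
   bounded f and a weight 0 <= w <= 1 the correlations corr_i of w with the
   shifts f(. + i) satisfy (sum_{i<=n} corr_i^2)^2 <= M^2 sum_{i,j<=n} |gram_ij|.
   For f = 1_A - a the Gram matrix is, up to O(n/N), the Toeplitz matrix
   c (j - i) - a^2, whose total mass is o(n^2); hence no set Y correlates with
   many shifts of A (correlation_energy_small).  Consequently, for sets X, Y of
   positive Loeb measure, some large i in X keeps Y ∩ (A - i) of positive
   measure (positive_shift).  Alternating this step on two sets S, T builds
   sequences b_i, c_j with all b_i + c_j in A (greedy_sequences); their ranges
   are the required B and C. *)
From Stdlib Require Import Reals Lra Lia Classical ClassicalEpsilon.
Open Scope R_scope.

Definition indb (b : bool) : R := if b then 1 else 0.

Definition density (X : nat -> bool) (N : nat) : R := INR (count X N) / INR N.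

Lemma indb_bound (b : bool) : 0 <= indb b <= 1.
Proof. destruct b; simpl; lra. Qed.

Lemma Rabs_le_bounds (x b : R) : Rabs x <= b -> - b <= x <= b.
Proof. unfold Rabs; destruct (Rcase_abs x); lra. Qed.

Lemma Rabs_div_INR_le (S B : R) (N : nat) :
  (0 < N)%nat -> Rabs S <= INR N * B -> Rabs (S / INR N) <= B.
Proof.
  intros HN H. assert (0 < INR N) by (apply lt_0_INR; lia).
  unfold Rdiv. rewrite Rabs_mult, Rabs_inv, (Rabs_pos_eq (INR N)) by lra.
  apply Rmult_le_reg_r with (INR N); auto. rewrite Rmult_assoc, Rinv_l by lra. lra.
Qed.

Lemma sum1_ext (F G : nat -> R) (n : nat) :
  (forall x, (1 <= x <= n)%nat -> F x = G x) -> sum1 F n = sum1 G n.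
Proof.
  induction n; simpl; intros H; auto.
  rewrite IHn, H; [reflexivity|lia|]. intros; apply H; lia.
Qed.

Lemma sum1_plus (F G : nat -> R) (n : nat) : sum1 (fun x => F x + G x) n = sum1 F n + sum1 G n.
Proof. induction n; simpl; lra. Qed.

Lemma sum1_minus (F G : nat -> R) (n : nat) : sum1 (fun x => F x - G x) n = sum1 F n - sum1 G n.
Proof. induction n; simpl; lra. Qed.

Lemma sum1_scal (c : R) (F : nat -> R) (n : nat) : sum1 (fun x => c * F x) n = c * sum1 F n.
Proof. induction n; simpl; [lra|]. rewrite IHn; ring. Qed.

Lemma sum1_const (c : R) (n : nat) : sum1 (fun _ => c) n = INR n * c.
Proof. induction n; simpl sum1; [simpl; lra|]. rewrite IHn, S_INR; ring. Qed.

Lemma sum1_le (F G : nat -> R) (n : nat) :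
  (forall x, (1 <= x <= n)%nat -> F x <= G x) -> sum1 F n <= sum1 G n.
Proof.
  induction n; simpl; intros H; [lra|].
  assert (sum1 F n <= sum1 G n) by (apply IHn; intros; apply H; lia).
  assert (F (S n) <= G (S n)) by (apply H; lia). lra.
Qed.

Lemma sum1_nonneg (F : nat -> R) (n : nat) :
  (forall x, (1 <= x <= n)%nat -> 0 <= F x) -> 0 <= sum1 F n.
Proof.
  intros H. rewrite <- (Rmult_0_r (INR n)), <- sum1_const. apply sum1_le. auto.
Qed.

Lemma sum1_bound (F : nat -> R) (n : nat) (B : R) :
  (forall x, (1 <= x <= n)%nat -> Rabs (F x) <= B) -> Rabs (sum1 F n) <= INR n * B.
Proof.
  intros H. rewrite <- sum1_const.
  induction n; simpl; [rewrite Rabs_R0; lra|].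
  eapply Rle_trans; [apply Rabs_triang|].
  assert (Rabs (sum1 F n) <= sum1 (fun _ => B) n) by (apply IHn; intros; apply H; lia).
  assert (Rabs (F (S n)) <= B) by (apply H; lia). lra.
Qed.

Lemma sum1_mono_n (e : nat -> R) (n m : nat) :
  (forall d, 0 <= e d) -> (n <= m)%nat -> sum1 e n <= sum1 e m.
Proof.
  intros He H. induction H; [lra|]. simpl. specialize (He (S m)). lra.
Qed.

Lemma count_sum (X : nat -> bool) (n : nat) : INR (count X n) = sum1 (fun x => indb (X x)) n.
Proof.
  induction n; simpl count; simpl sum1; [reflexivity|].
  rewrite plus_INR, IHn. unfold indb; destruct (X (S n)); simpl; lra.
Qed.

Lemma sum1_shift_index (F : nat -> R) (n : nat) :
  sum1 (fun x => F (S x)) n = sum1 F n - F 1%nat + F (S n).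
Proof. induction n; simpl; [lra|]. rewrite IHn. lra. Qed.

Lemma sum1_translate (F : nat -> R) (n i : nat) (B : R) : (forall y, Rabs (F y) <= B) ->
  Rabs (sum1 (fun x => F (x + i)%nat) n - sum1 F n) <= 2 * INR i * B.
Proof.
  intros H. induction i.
  - rewrite (sum1_ext _ F) by (intros; f_equal; lia).
    replace (sum1 F n - sum1 F n) with 0 by ring. rewrite Rabs_R0; simpl; lra.
  - rewrite (sum1_ext _ (fun x => (fun y => F (y + i)%nat) (S x)))
      by (intros; simpl; f_equal; lia).
    rewrite (sum1_shift_index (fun y => F (y + i)%nat)), S_INR.
    pose proof (Rabs_le_bounds _ _ (H (1 + i)%nat)).
    pose proof (Rabs_le_bounds _ _ (H (S n + i)%nat)).
    apply Rabs_le_bounds in IHi. apply Rabs_le. lra.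
Qed.

Lemma sum1_swap (F : nat -> nat -> R) (n m : nat) :
  sum1 (fun i => sum1 (fun j => F i j) m) n = sum1 (fun j => sum1 (fun i => F i j) n) m.
Proof.
  induction n; simpl.
  - rewrite sum1_const. ring.
  - rewrite IHn, <- sum1_plus. reflexivity.
Qed.

Lemma sum1_prod (F G : nat -> R) (n m : nat) :
  sum1 F n * sum1 G m = sum1 (fun i => sum1 (fun j => F i * G j) m) n.
Proof.
  induction n; simpl; [lra|].
  rewrite <- IHn, sum1_scal. ring.
Qed.

Lemma sum1_cauchy_schwarz (F : nat -> R) (n : nat) :
  (sum1 F n) ^ 2 <= INR n * sum1 (fun x => F x ^ 2) n.
Proof.
  induction n; [simpl; lra|].
  change (sum1 F (S n)) with (sum1 F n + F (S n)).
  change (sum1 (fun x => F x ^ 2) (S n)) with (sum1 (fun x => F x ^ 2) n + F (S n) ^ 2).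
  rewrite S_INR.
  destruct (Nat.eq_dec n 0) as [->|Hn]; [simpl; nra|].
  set (s := sum1 F n) in *. set (q := sum1 (fun x => F x ^ 2) n) in *. set (x := F (S n)).
  assert (0 < INR n) by (apply lt_0_INR; lia).
  assert (Hcross : 2 * s * x <= q + INR n * x ^ 2).
  { assert (0 <= (s - INR n * x) ^ 2) by apply pow2_ge_0.
    apply Rmult_le_reg_l with (INR n); nra. }
  assert (s ^ 2 <= INR n * q) by exact IHn.
  nra.
Qed.

Lemma sum1_peel (F : nat -> R) (n : nat) : sum1 F (S n) = F 1%nat + sum1 (fun i => F (S i)) n.
Proof. rewrite sum1_shift_index. simpl. ring. Qed.

Lemma sum1_reverse (g : nat -> R) (n : nat) : sum1 (fun i => g (S n - i)%nat) n = sum1 g n.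
Proof.
  induction n; [reflexivity|].
  rewrite sum1_peel. replace (S (S n) - 1)%nat with (S n) by lia.
  rewrite (sum1_ext _ (fun i => g (S n - i)%nat)) by (intros; f_equal; lia).
  rewrite IHn. simpl. ring.
Qed.

Lemma double_sum_toeplitz_bound (G : nat -> nat -> R) (e : nat -> R) (n : nat) (B C : R) :
  (forall d, 0 <= e d) -> 0 <= C ->
  (forall i j, G i j = G j i) ->
  (forall i, Rabs (G i i) <= B) ->
  (forall i j, (1 <= i)%nat -> (i < j)%nat -> (j <= n)%nat -> Rabs (G i j) <= e (j - i)%nat + C) ->
  sum1 (fun i => sum1 (fun j => Rabs (G i j)) n) n <= INR n * (B + 2 * sum1 e n + 2 * INR n * C).
Proof.
  intros He HC Hsym Hdiag Hoff.
  assert (He_n : 0 <= sum1 e n) by (apply sum1_nonneg; auto).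
  assert (HnC : 0 <= INR n * C) by (apply Rmult_le_pos; auto using pos_INR).
  (* each new row/column of the square [1,m+1]^2 costs at most B + 2 (sum e + n C) *)
  assert (Hcolumn : forall m, (m < n)%nat ->
            sum1 (fun i => Rabs (G i (S m))) m <= sum1 e n + INR n * C).
  { intros m Hm.
    apply Rle_trans with (sum1 (fun i => e (S m - i)%nat + C) m).
    - apply sum1_le. intros x Hx. apply Hoff; lia.
    - rewrite sum1_plus, sum1_reverse, sum1_const.
      assert (sum1 e m <= sum1 e n) by (apply sum1_mono_n; auto; lia).
      assert (INR m <= INR n) by (apply le_INR; lia). nra. }
  enough (Hsquare : forall m, (m <= n)%nat ->
    sum1 (fun i => sum1 (fun j => Rabs (G i j)) m) m <= INR m * (B + 2 * sum1 e n + 2 * INR n * C))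
    by (apply Hsquare; lia).
  induction m as [|m IH]; intros Hm; [simpl; lra|].
  assert (Hrow : sum1 (fun j => Rabs (G (S m) j)) m <= sum1 e n + INR n * C).
  { rewrite (sum1_ext _ (fun i => Rabs (G i (S m)))) by (intros; rewrite Hsym; reflexivity).
    apply Hcolumn; lia. }
  specialize (Hcolumn m ltac:(lia)). specialize (IH ltac:(lia)). specialize (Hdiag (S m)).
  change (sum1 (fun i => sum1 (fun j => Rabs (G i j)) (S m)) (S m)) with
    (sum1 (fun i => sum1 (fun j => Rabs (G i j)) m + Rabs (G i (S m))) m
     + (sum1 (fun j => Rabs (G (S m) j)) m + Rabs (G (S m) (S m)))).
  rewrite sum1_plus, S_INR. lra.
Qed.

Lemma count_le (X : nat -> bool) (n : nat) : (count X n <= n)%nat.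
Proof. induction n; simpl; [lia|]. destruct (X (S n)); lia. Qed.

Lemma count_above (X : nat -> bool) (m n : nat) :
  INR (count X n) - INR m <= sum1 (fun i => indb (andb (Nat.ltb m i) (X i))) n.
Proof.
  induction n.
  - simpl. pose proof (pos_INR m). lra.
  - change (sum1 ?F (S n)) with (sum1 F n + F (S n)). simpl count. rewrite plus_INR.
    destruct (Nat.ltb m (S n)) eqn:E.
    + simpl andb. unfold indb at 2. destruct (X (S n)); simpl; lra.
    + apply Nat.ltb_ge, le_INR in E. rewrite S_INR in E.
      pose proof (le_INR _ _ (count_le X n)).
      assert (0 <= sum1 (fun i => indb (andb (Nat.ltb m i) (X i))) n) by
        (apply sum1_nonneg; intros; apply indb_bound).
      pose proof (indb_bound (andb (Nat.ltb m (S n)) (X (S n)))).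
      destruct (X (S n)); simpl; lra.
Qed.

Lemma sum1_ge_on_set (g : nat -> R) (X : nat -> bool) (t : R) (m n : nat) :
  0 <= t -> (forall i, 0 <= g i) ->
  (forall i, (m < i <= n)%nat -> X i = true -> t <= g i) ->
  t * (INR (count X n) - INR m) <= sum1 g n.
Proof.
  intros Ht Hg Hbig.
  apply Rle_trans with (t * sum1 (fun i => indb (andb (Nat.ltb m i) (X i))) n).
  - apply Rmult_le_compat_l; auto using count_above.
  - rewrite <- sum1_scal. apply sum1_le. intros i Hi.
    destruct (Nat.ltb m i) eqn:E1, (X i) eqn:E2; simpl; rewrite ?Rmult_1_r, ?Rmult_0_r; auto.
    apply Hbig; auto. apply Nat.ltb_lt in E1. lia.
Qed.

Section Ultrafilter.

Variable U : (nat -> Prop) -> Prop.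
Hypothesis hU : nonprincipal_ultrafilter U.

Lemma U_mono (P Q : nat -> Prop) : U P -> (forall k, P k -> Q k) -> U Q.
Proof. destruct hU as [H _]. apply H. Qed.

Lemma U_and (P Q : nat -> Prop) : U P -> U Q -> U (fun k => P k /\ Q k).
Proof. destruct hU as [_ [H _]]. apply H. Qed.

Lemma U_true (P : nat -> Prop) : (forall k, P k) -> U P.
Proof.
  intros H. destruct hU as [_ [_ [_ [_ Hcofin]]]].
  apply (U_mono _ _ (Hcofin 0%nat)); auto.
Qed.

Lemma U_nonempty (P : nat -> Prop) : U P -> exists k, P k.
Proof.
  intros H. apply NNPP. intros Hno. destruct hU as [_ [_ [_ [Hproper _]]]].
  apply Hproper, (U_mono P); auto. intros k Pk; apply Hno; eauto.
Qed.

Lemma U_not (P : nat -> Prop) : ~ U P -> U (fun k => ~ P k).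
Proof. destruct hU as [_ [_ [Hdich _]]]. destruct (Hdich P); tauto. Qed.

Lemma U_forall_finite (P : nat -> nat -> Prop) (n : nat) :
  (forall d, (1 <= d <= n)%nat -> U (P d)) -> U (fun k => forall d, (1 <= d <= n)%nat -> P d k).
Proof.
  induction n; intros H.
  - apply U_true. intros k d Hd; lia.
  - apply (U_mono _ _ (U_and _ _ (IHn ltac:(intros; apply H; lia)) (H (S n) ltac:(lia)))).
    intros k [H1 H2] d Hd. destruct (Nat.eq_dec d (S n)) as [->|]; auto. apply H1; lia.
Qed.

End Ultrafilter.

Definition corr (w f : nat -> R) (N i : nat) : R := sum1 (fun x => w x * f (x + i)%nat) N / INR N.

Definition gram (f : nat -> R) (N i j : nat) : R :=
  sum1 (fun x => f (x + i)%nat * f (x + j)%nat) N / INR N.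

(* The quantity h x = sum_{i <= n} corr_i f (x+i), through which the energy of
   the correlations is compared with the Gram matrix. *)
Definition corr_profile (w f : nat -> R) (N n x : nat) : R :=
  sum1 (fun i => corr w f N i * f (x + i)%nat) n.

Section Correlations.

Variables (w f : nat -> R) (M : R) (N : nat).
Hypothesis HN : (0 < N)%nat.
Hypothesis Hw : forall x, 0 <= w x <= 1.
Hypothesis Hf : forall y, Rabs (f y) <= M.

Lemma corr_bound (i : nat) : Rabs (corr w f N i) <= M.
Proof.
  apply Rabs_div_INR_le; auto. apply sum1_bound. intros x _.
  rewrite Rabs_mult. pose proof (Hf (x + i)%nat). pose proof (Hw x).
  rewrite Rabs_pos_eq by lra. pose proof (Rabs_pos (f (x + i)%nat)). nra.
Qed.

Lemma gram_sym (i j : nat) : gram f N i j = gram f N j i.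
Proof. unfold gram. f_equal. apply sum1_ext. intros; ring. Qed.

Lemma gram_bound (i j : nat) : Rabs (gram f N i j) <= M ^ 2.
Proof.
  apply Rabs_div_INR_le; auto. apply sum1_bound. intros x _. rewrite Rabs_mult.
  pose proof (Hf (x + i)%nat). pose proof (Hf (x + j)%nat).
  pose proof (Rabs_pos (f (x + i)%nat)). pose proof (Rabs_pos (f (x + j)%nat)). nra.
Qed.

Lemma corr_energy_eq (n : nat) :
  sum1 (fun i => corr w f N i ^ 2) n = sum1 (fun x => w x * corr_profile w f N n x) N / INR N.
Proof.
  rewrite (sum1_ext _ (fun i => / INR N * sum1 (fun x => corr w f N i * (w x * f (x + i)%nat)) N)).
  2:{ intros i _. rewrite sum1_scal. unfold corr, Rdiv. ring. }
  rewrite sum1_scal, sum1_swap. unfold Rdiv. rewrite Rmult_comm. f_equal.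
  apply sum1_ext. intros x _. unfold corr_profile. rewrite <- sum1_scal. apply sum1_ext. intros; ring.
Qed.

Lemma corr_profile_energy_eq (n : nat) :
  sum1 (fun x => corr_profile w f N n x ^ 2) N / INR N =
  sum1 (fun i => sum1 (fun j => corr w f N i * corr w f N j * gram f N i j) n) n.
Proof.
  rewrite (sum1_ext (fun x => corr_profile w f N n x ^ 2) (fun x => sum1 (fun i => sum1 (fun j =>
     (corr w f N i * f (x + i)%nat) * (corr w f N j * f (x + j)%nat)) n) n)).
  2:{ intros x _. unfold corr_profile. rewrite <- sum1_prod. ring. }
  rewrite sum1_swap. unfold Rdiv. rewrite Rmult_comm, <- sum1_scal. apply sum1_ext. intros i _.
  rewrite sum1_swap, <- sum1_scal. apply sum1_ext. intros j _.
  rewrite (sum1_ext _ (fun x => (corr w f N i * corr w f N j) * (f (x + i)%nat * f (x + j)%nat)))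
    by (intros; ring).
  rewrite sum1_scal. unfold gram, Rdiv. ring.
Qed.

Lemma corr_energy_bound (n : nat) :
  (sum1 (fun i => corr w f N i ^ 2) n) ^ 2 <=
  M ^ 2 * sum1 (fun i => sum1 (fun j => Rabs (gram f N i j)) n) n.
Proof.
  assert (HNR : 0 < INR N) by (apply lt_0_INR; lia).
  set (h := corr_profile w f N n).
  set (E := sum1 (fun i => corr w f N i ^ 2) n).
  assert (HE : 0 <= E) by (apply sum1_nonneg; intros; apply pow2_ge_0).
  assert (H_mean : E <= sum1 (fun x => Rabs (h x)) N / INR N).
  { unfold E. rewrite corr_energy_eq. unfold Rdiv.
    apply Rmult_le_compat_r; [left; apply Rinv_0_lt_compat; auto|].
    apply sum1_le. intros x _. fold (h x). pose proof (Hw x). pose proof (Rle_abs (h x)).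
    pose proof (Rabs_pos (h x)). nra. }
  assert (H_cs : (sum1 (fun x => Rabs (h x)) N / INR N) ^ 2 <= sum1 (fun x => h x ^ 2) N / INR N).
  { pose proof (sum1_cauchy_schwarz (fun x => Rabs (h x)) N) as Hcs.
    rewrite (sum1_ext (fun x => Rabs (h x) ^ 2) (fun x => h x ^ 2)) in Hcs
      by (intros; apply pow2_abs).
    apply Rmult_le_reg_r with (INR N ^ 2); [apply pow_lt; auto|].
    replace ((sum1 (fun x => Rabs (h x)) N / INR N) ^ 2 * INR N ^ 2)
      with ((sum1 (fun x => Rabs (h x)) N) ^ 2) by (field; lra).
    replace (sum1 (fun x => h x ^ 2) N / INR N * INR N ^ 2)
      with (INR N * sum1 (fun x => h x ^ 2) N) by (field; lra). exact Hcs. }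
  unfold h in H_cs. rewrite corr_profile_energy_eq in H_cs.
  assert (H_gram : sum1 (fun i => sum1 (fun j => corr w f N i * corr w f N j * gram f N i j) n) n <=
     M ^ 2 * sum1 (fun i => sum1 (fun j => Rabs (gram f N i j)) n) n).
  { rewrite <- sum1_scal. apply sum1_le. intros i _. rewrite <- sum1_scal. apply sum1_le. intros j _.
    eapply Rle_trans; [apply Rle_abs|]. rewrite !Rabs_mult.
    pose proof (corr_bound i). pose proof (corr_bound j).
    pose proof (Rabs_pos (corr w f N i)). pose proof (Rabs_pos (corr w f N j)).
    pose proof (Rabs_pos (gram f N i j)).
    assert (Rabs (corr w f N i) * Rabs (corr w f N j) <= M ^ 2) by nra. nra. }
  assert (E ^ 2 <= (sum1 (fun x => Rabs (h x)) N / INR N) ^ 2) by (apply pow_incr; auto).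
  fold h in H_cs. lra.
Qed.

Lemma gram_translate (i j : nat) : (i <= j)%nat ->
  Rabs (gram f N i j - gram f N 0 (j - i)) <= 2 * INR i * M ^ 2 / INR N.
Proof.
  intros Hij. unfold gram, Rdiv. rewrite <- Rmult_minus_distr_r.
  apply Rabs_div_INR_le; auto.
  replace (INR N * (2 * INR i * M ^ 2 * / INR N)) with (2 * INR i * M ^ 2)
    by (field; apply not_0_INR; lia).
  rewrite (sum1_ext _ (fun x => (fun y => f (y + 0)%nat * f (y + (j - i))%nat) (x + i)%nat))
    by (intros x _; f_equal; f_equal; lia).
  apply (sum1_translate (fun y => f (y + 0)%nat * f (y + (j - i))%nat)).
  intros y. rewrite Rabs_mult. pose proof (Hf (y + 0)%nat). pose proof (Hf (y + (j - i))%nat).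
  pose proof (Rabs_pos (f (y + 0)%nat)). pose proof (Rabs_pos (f (y + (j - i))%nat)). nra.
Qed.

End Correlations.

Definition balanced (A : nat -> bool) (a : R) (y : nat) : R := indb (A y) - a.

Definition gram_error_const (a : R) : R := 2 * (1 + a) ^ 2 + 1 + 4 * a.

Section BalancedFunction.

Variables (A : nat -> bool) (a : R).
Hypothesis Ha : 0 < a.

Lemma balanced_bound (y : nat) : Rabs (balanced A a y) <= 1 + a.
Proof. unfold balanced. pose proof (indb_bound (A y)). apply Rabs_le. lra. Qed.

Lemma corr_indicator_eq (Y : nat -> bool) (N i : nat) : (0 < N)%nat ->
  corr (fun x => indb (Y x)) (balanced A a) N i =
  density (fun x => andb (Y x) (A (x + i)%nat)) N - a * density Y N.
Proof.
  intros HN. assert (0 < INR N) by (apply lt_0_INR; lia).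
  unfold corr, density. rewrite !count_sum.
  rewrite (sum1_ext _ (fun x => indb (andb (Y x) (A (x + i)%nat)) - a * indb (Y x))).
  2:{ intros. unfold balanced, indb. destruct (Y x), (A (x + i)%nat); simpl; ring. }
  rewrite sum1_minus, sum1_scal. field. lra.
Qed.

Lemma gram_balanced_eq (N d : nat) : (0 < N)%nat ->
  gram (balanced A a) N 0 d = density (shift_inter A d) N - a * density A N
     - a * (sum1 (fun x => indb (A (x + d)%nat)) N / INR N) + a ^ 2.
Proof.
  intros HN. assert (0 < INR N) by (apply lt_0_INR; lia).
  unfold gram, density. rewrite !count_sum.
  rewrite (sum1_ext _ (fun x => indb (shift_inter A d x) - a * indb (A x)
                                - a * indb (A (x + d)%nat) + a ^ 2)).
  2:{ intros x _. unfold balanced, shift_inter, indb. rewrite Nat.add_0_r.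
      destruct (A x), (A (x + d)%nat); simpl; ring. }
  rewrite sum1_plus, !sum1_minus, !sum1_scal, sum1_const. field. lra.
Qed.

Lemma gram_balanced_approx (N n i j : nat) (cd eta : R) :
  (0 < N)%nat -> 0 < eta -> (i < j)%nat -> (j <= n)%nat -> INR n <= eta * INR N ->
  Rabs (density (shift_inter A (j - i)) N - cd) < eta ->
  Rabs (density A N - a) < eta ->
  Rabs (gram (balanced A a) N i j) <= Rabs (cd - a ^ 2) + gram_error_const a * eta.
Proof.
  intros HN He Hij Hj Hn Hc HA. assert (0 < INR N) by (apply lt_0_INR; lia).
  unfold gram_error_const.
  pose proof (gram_translate (balanced A a) (1 + a) N HN balanced_bound i j ltac:(lia)) as Htr.
  rewrite (gram_balanced_eq N (j - i) HN) in Htr.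
  assert (INR i <= INR n) by (apply le_INR; lia).
  assert (INR (j - i) <= INR n) by (apply le_INR; lia).
  assert (Htr_small : 2 * INR i * (1 + a) ^ 2 / INR N <= 2 * (1 + a) ^ 2 * eta).
  { apply Rmult_le_reg_r with (INR N); auto. unfold Rdiv. rewrite Rmult_assoc, Rinv_l by lra.
    assert (0 <= (1 + a) ^ 2) by apply pow2_ge_0. nra. }
  (* the density of A + d differs from that of A by at most 2 d / N <= 2 eta *)
  set (s := sum1 (fun x => indb (A (x + (j - i))%nat)) N) in *.
  assert (Hs : Rabs (s / INR N - density A N) <= 2 * eta).
  { unfold density, Rdiv. rewrite <- Rmult_minus_distr_r. apply Rabs_div_INR_le; auto.
    rewrite count_sum. eapply Rle_trans.
    - apply (sum1_translate (fun y => indb (A y)) N (j - i) 1).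
      intros y. pose proof (indb_bound (A y)). apply Rabs_le; lra.
    - nra. }
  apply Rabs_le_bounds in Htr. apply Rabs_le_bounds in Hs.
  apply Rabs_def2 in Hc. apply Rabs_def2 in HA.
  set (g := gram (balanced A a) N i j) in *.
  assert (Hdev : Rabs (g - (cd - a ^ 2)) <= (2 * (1 + a) ^ 2 + 1 + 4 * a) * eta).
  { apply Rabs_le. nra. }
  eapply Rle_trans; [|apply Rplus_le_compat_l; exact Hdev].
  replace g with ((cd - a ^ 2) + (g - (cd - a ^ 2))) at 1 by ring. apply Rabs_triang.
Qed.

Lemma gram_balanced_mass (c : nat -> R) (N n : nat) (eta : R) :
  (0 < N)%nat -> 0 < eta -> INR n <= eta * INR N ->
  (forall d, (1 <= d <= n)%nat -> Rabs (density (shift_inter A d) N - c d) < eta) ->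
  Rabs (density A N - a) < eta ->
  sum1 (fun i => sum1 (fun j => Rabs (gram (balanced A a) N i j)) n) n <=
  INR n * ((1 + a) ^ 2 + 2 * sum1 (fun d => Rabs (c d - a ^ 2)) n
           + 2 * INR n * (gram_error_const a * eta)).
Proof.
  intros HN He Hn Hc HA.
  assert (0 < gram_error_const a) by (unfold gram_error_const; nra).
  apply double_sum_toeplitz_bound.
  - intros; apply Rabs_pos.
  - nra.
  - apply gram_sym.
  - intros i. apply (gram_bound _ _ N HN balanced_bound).
  - intros i j Hi Hij Hj. apply (gram_balanced_approx N n); auto. apply Hc; lia.
Qed.

End BalancedFunction.

Lemma energy_budget (S n M E K eta Q : R) :
  0 <= S -> 0 < Q -> 0 < M -> 0 <= n ->
  S ^ 2 <= M ^ 2 * (n * (M ^ 2 + 2 * E + 2 * n * (K * eta))) ->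
  E <= n * (Q ^ 2 / (6 * M ^ 2)) -> M ^ 4 <= n * (Q ^ 2 / 3) ->
  M ^ 2 * (2 * (K * eta)) = Q ^ 2 / 3 ->
  S <= Q * n.
Proof.
  intros HS HQ HM Hn Hsq HE HM4 Heta.
  assert (HE2 : M ^ 2 * (2 * E) <= n * (Q ^ 2 / 3)).
  { replace (n * (Q ^ 2 / 3)) with (2 * M ^ 2 * (n * (Q ^ 2 / (6 * M ^ 2)))) by (field; nra).
    nra. }
  assert (Hsq' : S ^ 2 <= (Q * n) ^ 2).
  { replace (M ^ 2 * (n * (M ^ 2 + 2 * E + 2 * n * (K * eta))))
      with (n * (M ^ 4 + M ^ 2 * (2 * E) + n * (M ^ 2 * (2 * (K * eta))))) in Hsq by ring.
    rewrite Heta in Hsq. nra. }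
  destruct (Rle_dec S (Q * n)) as [|Hgt]; auto.
  apply Rnot_le_lt in Hgt. exfalso.
  assert (0 <= Q * n) by nra.
  assert ((Q * n) * (Q * n) < S * S) by (apply Rmult_le_0_lt_compat; lra).
  simpl in Hsq'. lra.
Qed.

Lemma cesaro_small (e : nat -> R) (eps : R) :
  Un_cv (fun n => / INR n * sum1 e n) 0 -> 0 < eps ->
  exists n0, forall n, (n0 <= n)%nat -> sum1 e n <= INR n * eps.
Proof.
  intros Hcv Heps. destruct (Hcv eps Heps) as [n0 Hn0]. exists (S n0). intros n Hn.
  assert (0 < INR n) by (apply lt_0_INR; lia).
  specialize (Hn0 n ltac:(lia)). unfold R_dist in Hn0. rewrite Rminus_0_r in Hn0.
  apply Rabs_def2 in Hn0.
  apply Rmult_le_reg_l with (/ INR n); [apply Rinv_0_lt_compat; auto|].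
  rewrite <- Rmult_assoc, Rinv_l by lra. lra.
Qed.

(* Y has positive Loeb measure in the window [1, N]: its density is bounded
   below by a fixed delta > 0 for U-almost every index k. *)
Definition loeb_positive (U : (nat -> Prop) -> Prop) (Nk : nat -> nat) (Y : nat -> bool) : Prop :=
  exists delta, delta > 0 /\ U (fun k => density Y (Nk k) > delta).

Lemma loeb_positive_full (U : (nat -> Prop) -> Prop) (hU : nonprincipal_ultrafilter U)
  (Nk : nat -> nat) : hyper_infinite U Nk -> loeb_positive U Nk (fun _ => true).
Proof.
  intros HNk. exists (1/2). split; [lra|].
  apply (U_mono U hU _ _ (HNk 0%nat)). intros k Hk. unfold density.
  assert (Hfull : forall N, count (fun _ => true) N = N) by (induction N; simpl; lia).
  rewrite Hfull. assert (0 < INR (Nk k)) by (apply lt_0_INR; lia).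
  replace (INR (Nk k) / INR (Nk k)) with 1 by (field; lra). lra.
Qed.

Section Pseudorandom.

Variable U : (nat -> Prop) -> Prop.
Hypothesis hU : nonprincipal_ultrafilter U.
Variables (A : nat -> bool) (a : R) (Nk : nat -> nat) (c : nat -> R).
Hypothesis Ha : 0 < a.
Hypothesis HNk : hyper_infinite U Nk.
Hypothesis HA : loeb_measure_is U Nk A a.
Hypothesis Hc : forall i : nat, (1 <= i)%nat -> loeb_measure_is U Nk (shift_inter A i) (c i).
Hypothesis Hcv : Un_cv (fun n => / INR n * sum1 (fun i => Rabs (c i - a ^ 2)) n) 0.

Lemma correlation_energy_small (Q : R) : 0 < Q -> exists n0, forall n, (n0 <= n)%nat ->
  U (fun k => forall Y,
       sum1 (fun i => corr (fun x => indb (Y x)) (balanced A a) (Nk k) i ^ 2) n <= Q * INR n).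
Proof.
  intros HQ.
  set (M := 1 + a). set (K := gram_error_const a).
  assert (HM : 0 < M) by (unfold M; lra).
  assert (HK : 0 < K) by (unfold K, gram_error_const; nra).
  set (eta := Q ^ 2 / (6 * M ^ 2 * K)).
  assert (Heta : 0 < eta) by (unfold eta; apply Rdiv_lt_0_compat; [nra|]; apply Rmult_lt_0_compat; nra).
  set (E := fun n => sum1 (fun i => Rabs (c i - a ^ 2)) n).
  destruct (cesaro_small _ (Q ^ 2 / (6 * M ^ 2)) Hcv) as [N1 HEn]; [apply Rdiv_lt_0_compat; nra|].
  destruct (INR_unbounded (3 * M ^ 4 / Q ^ 2)) as [N2 HN2].
  exists (S (max N1 N2)). intros n Hn.
  specialize (HEn n ltac:(lia)). fold (E n) in HEn.
  assert (HMn : M ^ 4 <= INR n * (Q ^ 2 / 3)).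
  { assert (INR N2 <= INR n) by (apply le_INR; lia).
    assert (Hlt : 3 * M ^ 4 / Q ^ 2 < INR n) by lra.
    apply Rmult_lt_compat_r with (r := Q ^ 2 / 3) in Hlt; [|nra].
    replace (3 * M ^ 4 / Q ^ 2 * (Q ^ 2 / 3)) with (M ^ 4) in Hlt by (field; lra). lra. }
  (* U-almost surely: N >= n / eta and all relevant densities are eta-close *)
  destruct (INR_unbounded (INR n / eta)) as [m Hm].
  assert (Ushift : U (fun k => forall d, (1 <= d <= n)%nat ->
      Rabs (density (shift_inter A d) (Nk k) - c d) < eta)).
  { apply U_forall_finite; auto. intros d Hd. apply (Hc d ltac:(lia)). lra. }
  apply (U_mono U hU _ _ (U_and U hU _ _ (U_and U hU _ _ Ushift (HA eta ltac:(lra)))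
                                          (U_and U hU _ _ (HNk m) (HNk 0%nat)))).
  intros k [[Hshift Hdens] [Hm_k H0_k]] Y.
  assert (HnN : INR n <= eta * INR (Nk k)).
  { assert (INR m < INR (Nk k)) by (apply lt_INR; lia).
    apply Rmult_lt_compat_r with (r := eta) in Hm; auto.
    replace (INR n / eta * eta) with (INR n) in Hm by (field; lra). nra. }
  apply (energy_budget _ _ M (E n) K eta); auto using pos_INR.
  - apply sum1_nonneg; intros; apply pow2_ge_0.
  - eapply Rle_trans.
    + apply (corr_energy_bound _ _ M (Nk k) H0_k).
      * intros x; apply indb_bound.
      * apply balanced_bound; auto.
    + apply Rmult_le_compat_l; [nra|]. apply gram_balanced_mass; auto.
  - unfold eta. field. nra.
Qed.

Lemma small_correlation_positive (Y : nat -> bool) (dY : R) (i : nat) :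
  dY > 0 -> U (fun k => density Y (Nk k) > dY) ->
  U (fun k => corr (fun x => indb (Y x)) (balanced A a) (Nk k) i ^ 2 < (a * dY / 2) ^ 2) ->
  loeb_positive U Nk (fun x => andb (Y x) (A (x + i)%nat)).
Proof.
  intros HdY UY Usmall. exists (a * dY / 2). split; [nra|].
  apply (U_mono U hU _ _ (U_and U hU _ _ Usmall (U_and U hU _ _ UY (HNk 0%nat)))).
  intros k [Hsmall [HY HN]].
  rewrite corr_indicator_eq in Hsmall by auto.
  set (z := density (fun x => andb (Y x) (A (x + i)%nat)) (Nk k)) in *.
  set (t := density Y (Nk k)) in *.
  assert (Hth : 0 < a * dY / 2) by nra.
  assert (Hdev : - (a * dY / 2) < z - a * t).
  { apply Rnot_le_lt. intros Hle. apply (Rlt_irrefl ((a * dY / 2) ^ 2)). nra. }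
  nra.
Qed.

(* Otherwise every such
   i would carry a correlation of size >= a dY / 2, and at a standard window
   length n = N_k0 where X has density > dX these would contribute energy
   of order dX n, contradicting correlation_energy_small. *)
Lemma positive_shift (X Y : nat -> bool) (m : nat) :
  loeb_positive U Nk X -> loeb_positive U Nk Y ->
  exists i, (m < i)%nat /\ X i = true /\ loeb_positive U Nk (fun x => andb (Y x) (A (x + i)%nat)).
Proof.
  intros [dX [HdX UX]] [dY [HdY UY]].
  set (th := a * dY / 2).
  assert (Hth : 0 < th) by (unfold th; nra).
  set (Q := th ^ 2 * dX / 4).
  assert (HQ : 0 < Q) by (unfold Q; apply Rdiv_lt_0_compat; [apply Rmult_lt_0_compat; [apply pow_lt|]|]; lra).
  destruct (correlation_energy_small Q HQ) as [n0 Hn0].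
  destruct (INR_unbounded (2 * INR m / dX)) as [m2 Hm2].
  destruct (U_nonempty U hU _ (U_and U hU _ _ UX (U_and U hU _ _ (HNk n0) (HNk m2))))
    as [k0 [HX0 [Hk1 Hk2]]].
  set (n := Nk k0) in *.
  apply NNPP. intros Hno.
  set (g := fun k i => corr (fun x => indb (Y x)) (balanced A a) (Nk k) i ^ 2).
  assert (Ularge : U (fun k => forall i, (1 <= i <= n)%nat ->
                        (m < i)%nat -> X i = true -> th ^ 2 <= g k i)).
  { apply U_forall_finite; auto. intros i Hi.
    destruct (classic ((m < i)%nat /\ X i = true)) as [[Hmi HXi]|Hnot].
    - assert (Hnsmall : ~ U (fun k => g k i < th ^ 2)).
      { intros Usmall. apply Hno. exists i. repeat split; auto.
        apply (small_correlation_positive Y dY i); auto. }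
      apply (U_mono U hU _ _ (U_not U hU _ Hnsmall)). intros k Hk _ _. lra.
    - apply U_true; auto. intros k Hmi HXi. tauto. }
  destruct (U_nonempty U hU _ (U_and U hU _ _ Ularge (Hn0 n ltac:(lia)))) as [k [Hlarge Hsmall]].
  specialize (Hsmall Y).
  assert (Hn_pos : 0 < INR n) by (apply lt_0_INR; lia).
  assert (Hcount : th ^ 2 * (INR (count X n) - INR m) <= sum1 (g k) n).
  { apply sum1_ge_on_set; [apply pow2_ge_0 | intros; apply pow2_ge_0 |].
    intros i Hi HXi. apply Hlarge; auto; lia. }
  assert (Hm_small : INR m < dX * INR n / 2).
  { assert (INR m2 < INR n) by (apply lt_INR; lia).
    assert (Hlt : 2 * INR m / dX < INR n) by lra.
    apply Rmult_lt_compat_r with (r := dX / 2) in Hlt; [|lra].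
    replace (2 * INR m / dX * (dX / 2)) with (INR m) in Hlt by (field; lra). lra. }
  assert (Hdense : dX * INR n < INR (count X n)).
  { unfold density in HX0. apply Rmult_lt_reg_r with (/ INR n); [apply Rinv_0_lt_compat; auto|].
    rewrite Rmult_assoc, Rinv_r by lra. rewrite Rmult_1_r. exact HX0. }
  assert (0 < th ^ 2 * dX * INR n)
    by (apply Rmult_lt_0_compat; [apply Rmult_lt_0_compat; [apply pow_lt|]|]; lra).
  unfold g, Q in *. nra.
Qed.

Lemma positive_double_shift (S T : nat -> bool) (n : nat) :
  loeb_positive U Nk S -> loeb_positive U Nk T ->
  exists b c, (n < b)%nat /\ (n < c)%nat /\ S c = true /\ T b = true /\ A (b + c)%nat = true /\
    loeb_positive U Nk (fun x => andb (S x) (A (x + b)%nat)) /\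
    loeb_positive U Nk (fun x => andb (T x) (A (x + c)%nat)).
Proof.
  intros HS HT.
  destruct (positive_shift S T n HS HT) as [c1 [Hc_n [HSc HT']]].
  destruct (positive_shift _ S n HT' HS) as [b1 [Hb_n [HTb HS']]].
  apply andb_prop in HTb as [HTb HAbc].
  exists b1, c1. repeat split; auto.
Qed.

End Pseudorandom.

Lemma dependent_choice_nat (T : Type) (Rel : nat -> T -> T -> Prop) (x0 : T) :
  (forall n x, exists y, Rel n x y) ->
  exists f : nat -> T, f 0%nat = x0 /\ forall n, Rel n (f n) (f (S n)).
Proof.
  intros H.
  set (next := fun n x => proj1_sig (constructive_indefinite_description _ (H n x))).
  exists (fix f (n : nat) : T := match n with 0%nat => x0 | S m => next m (f m) end).
  split; [reflexivity|]. intros n. apply (proj2_sig (constructive_indefinite_description _ (H n _))).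
Qed.

Lemma filtered_chain (chain : nat -> nat -> bool) (P : nat -> nat -> Prop) :
  (forall m x, chain (S m) x = true -> chain m x = true /\ P m x) ->
  forall m x, chain m x = true -> forall l, (l < m)%nat -> P l x.
Proof.
  intros Hstep m. induction m as [|m IH]; intros x Hx l Hl; [lia|].
  destruct (Hstep m x Hx) as [HSm HPm].
  destruct (Nat.eq_dec l m) as [->|]; auto. apply IH; auto; lia.
Qed.

Record greedy_state : Type := GreedyState {
  gs_S : nat -> bool; gs_T : nat -> bool; gs_b : nat; gs_c : nat }.

(* The greedy construction, for any notion Good of largeness of sets that holds
   for N and allows the double shifting step: maintain two Good sets S, T;
   at each stage pick c in S and b in T (both large) with b + c in A and
   restrict S to S ∩ (A - b) and T to T ∩ (A - c).  Then b_i + c_j ∈ A for all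
   i, j: for i < j because c_j ∈ S_j ⊆ A - b_i, for j < i symmetrically. *)
Section GreedyConstruction.

Variables (A : nat -> bool) (Good : (nat -> bool) -> Prop).
Hypothesis Good_full : Good (fun _ => true).
Hypothesis Good_step : forall S T n, Good S -> Good T ->
  exists b c, (n < b)%nat /\ (n < c)%nat /\ S c = true /\ T b = true /\ A (b + c)%nat = true /\
    Good (fun x => andb (S x) (A (x + b)%nat)) /\ Good (fun x => andb (T x) (A (x + c)%nat)).

Definition greedy_step (n : nat) (s s' : greedy_state) : Prop :=
  Good (gs_S s) -> Good (gs_T s) ->
  (n < gs_b s')%nat /\ (n < gs_c s')%nat /\
  gs_S s (gs_c s') = true /\ gs_T s (gs_b s') = true /\ A (gs_b s' + gs_c s')%nat = true /\
  gs_S s' = (fun x => andb (gs_S s x) (A (x + gs_b s')%nat)) /\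
  gs_T s' = (fun x => andb (gs_T s x) (A (x + gs_c s')%nat)) /\
  Good (gs_S s') /\ Good (gs_T s').

(* A step is always possible: by Good_step when the invariant holds, and
   vacuously otherwise. *)
Lemma greedy_step_exists (n : nat) (s : greedy_state) : exists s', greedy_step n s s'.
Proof.
  destruct (classic (Good (gs_S s) /\ Good (gs_T s))) as [[HS HT]|Hbad].
  - destruct (Good_step _ _ n HS HT) as [b [c [Hb [Hc [HSc [HTb [HA [HS' HT']]]]]]]].
    exists (GreedyState (fun x => andb (gs_S s x) (A (x + b)%nat))
                        (fun x => andb (gs_T s x) (A (x + c)%nat)) b c).
    intros _ _. simpl. repeat split; auto.
  - exists s. intros HS HT. tauto.
Qed.

Lemma greedy_sequences : exists bs cs : nat -> nat,
  (forall n, (n < bs n)%nat) /\ (forall n, (n < cs n)%nat) /\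
  forall i j, A (bs i + cs j)%nat = true.
Proof.
  destruct (dependent_choice_nat _ greedy_step (GreedyState (fun _ => true) (fun _ => true) 0 0)
              greedy_step_exists) as [f [Hf0 Hf]].
  assert (Hgood : forall n, Good (gs_S (f n)) /\ Good (gs_T (f n))).
  { induction n as [|n [HS HT]]; [rewrite Hf0; auto|].
    destruct (Hf n HS HT) as [_ [_ [_ [_ [_ [_ [_ HG]]]]]]]. exact HG. }
  pose proof (fun n => Hf n (proj1 (Hgood n)) (proj2 (Hgood n))) as Hspec.
  set (bs := fun n => gs_b (f (S n))). set (cs := fun n => gs_c (f (S n))).
  assert (HS_chain : forall m x, gs_S (f (S m)) x = true ->
                       gs_S (f m) x = true /\ A (x + bs m)%nat = true).
  { intros m x Hx. destruct (Hspec m) as [_ [_ [_ [_ [_ [HSeq _]]]]]].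
    rewrite HSeq in Hx. apply andb_prop in Hx. exact Hx. }
  assert (HT_chain : forall m x, gs_T (f (S m)) x = true ->
                       gs_T (f m) x = true /\ A (x + cs m)%nat = true).
  { intros m x Hx. destruct (Hspec m) as [_ [_ [_ [_ [_ [_ [HTeq _]]]]]]].
    rewrite HTeq in Hx. apply andb_prop in Hx. exact Hx. }
  exists bs, cs. split; [intros n; apply (Hspec n)|]. split; [intros n; apply (Hspec n)|].
  intros i j. destruct (Nat.lt_total i j) as [Hij|[->|Hji]].
  - rewrite Nat.add_comm. apply (filtered_chain _ _ HS_chain j); [apply (Hspec j)|auto].
  - apply (Hspec j).
  - apply (filtered_chain _ _ HT_chain i); [apply (Hspec i)|auto].
Qed.

End GreedyConstruction.

Definition range_of (s : nat -> nat) (x : nat) : bool :=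
  if excluded_middle_informative (exists n, s n = x) then true else false.

Lemma range_ofP (s : nat -> nat) (x : nat) : range_of s x = true <-> exists n, s n = x.
Proof.
  unfold range_of. destruct (excluded_middle_informative _); split; auto; discriminate.
Qed.

Lemma sumset_of_sequences (A : nat -> bool) (bs cs : nat -> nat) :
  (forall n, (n < bs n)%nat) -> (forall n, (n < cs n)%nat) -> (forall i j, A (bs i + cs j)%nat = true) ->
  exists B C : nat -> bool,
    subset_posnat B /\ subset_posnat C /\ infinite_set B /\ infinite_set C /\
    (forall b c : nat, B b = true -> C c = true -> A (b + c)%nat = true).
Proof.
  intros Hbs Hcs HA. exists (range_of bs), (range_of cs).
  repeat split.
  - intros x [n <-]%range_ofP. specialize (Hbs n). lia.
  - intros x [n <-]%range_ofP. specialize (Hcs n). lia.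
  - intros m. exists (bs m). split; auto. apply range_ofP; eauto.
  - intros m. exists (cs m). split; auto. apply range_ofP; eauto.
  - intros x y [i <-]%range_ofP [j <-]%range_ofP. apply HA.
Qed.

Theorem theorem5p5 (U : (nat -> Prop) -> Prop) (A : nat -> bool)
  (hU : nonprincipal_ultrafilter U) (hA : pseudorandom U A) :
  exists B C : nat -> bool,
    subset_posnat B /\ subset_posnat C /\
    infinite_set B /\ infinite_set C /\
    (forall b c : nat, B b = true -> C c = true -> A (b + c)%nat = true).
Proof.
  destruct hA as [a [Ha [_ [Nk [HNk [HA [c [Hc Hcv]]]]]]]].
  destruct (greedy_sequences A (loeb_positive U Nk) (loeb_positive_full U hU Nk HNk)
              (positive_double_shift U hU A a Nk c Ha HNk HA Hc Hcv)) as [bs [cs [Hbs [Hcs HAbc]]]].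
  exact (sumset_of_sequences A bs cs Hbs Hcs HAbc).
Qed.
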